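(* Let $G=(V,E)$ be a connected undirected unweighted graph in which every node has a self-loop. Then the set function $S\mapsto\operatorname{fp}^{\infty}(G^S)$ on subsets of $V$ is submodular.
   Context: Positional Voter model. A graph $G=(V,E,w)$ has node set $V$ with $|V|=n$, edge set $E\subseteq V\times V$ and weights $w\colon E\to\mathbb{R}_{>0}$; $\operatorname{in}(u)=\{v\in V:(v,u)\in E\}$. ''Undirected unweighted'' means $E$ is symmetric and $w\equiv 1$; ''self-loop at $u$'' means $(u,u)\in E$. A configuration is a set $X\subseteq V$ (the nodes carrying the novel trait $A$). Given a biased set $S\subseteq V$ and bias $\delta\ge 0$, define $f^S_X(v\mid u)=1+\delta$ if $v\in X$ and $u\in S$, and $1$ otherwise. The process $(\mathcal{X}_t)_{t\ge0}$: given $\mathcal{X}_t=X$, a node $u$ is chosen uniformly at random from $V$, then $v\in\operatorname{in}(u)$ is chosen with probability $\frac{f^S_X(v\mid u)\,w(v,u)}{\sum_{x\in\operatorname{in}(u)} f^S_X(x\mid u)\,w(x,u)}$, and $\mathcal{X}_{t+1}=X\cup\{u\}$ if $v\in X$, $\mathcal{X}_{t+1}=X\setminus\{u\}$ otherwise. Define $\operatorname{fp}(G^S,\delta,X)=\mathbb{P}[\exists t\ge0:\mathcal{X}_t=V\mid\mathcal{X}_0=X]$, $\operatorname{fp}(G^S,\delta)=\frac1n\sum_{u\in V}\operatorname{fp}(G^S,\delta,\{u\})$, and $\operatorname{fp}^{\infty}(G^S)=\lim_{\delta\to\infty}\operatorname{fp}(G^S,\delta)$. A set function $f$ on subsets of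 $V$ is submodular if $f(S_1)+f(S_2)\ge f(S_1\cup S_2)+f(S_1\cap S_2)$ for all $S_1,S_2\subseteq V$. *)

From HB Require Import structures.
From mathcomp Require Import all_boot all_order all_algebra.
From mathcomp Require Import all_classical all_reals all_analysis.
Set Implicit Arguments. Unset Strict Implicit. Unset Printing Implicit Defensive.
Import Order.TTheory GRing.Theory Num.Theory.
Import numFieldTopology.Exports numFieldNormedType.Exports.
Local Open Scope ring_scope.

Section PositionalVoter.
Variables (R : realType) (V : finType).
(* E v u : the (unweighted) edge (v,u) is in E; all weights are 1. *)
Variable E : rel V.
Variables (S : {set V}) (delta : R).

Definition pv_fitness (X : {set V}) (v u : V) : R :=
  if (v \in X) && (u \in S) then 1 + delta else 1.

Definition pv_step (X : {set V}) (u v : V) : {set V} :=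
  if v \in X then u |: X else X :\ u.

Definition pv_trans (X Y : {set V}) : R :=
  \sum_(u : V) (#|V|%:R)^-1 *
    \sum_(v : V | E v u)
       (pv_fitness X v u / \sum_(x : V | E x u) pv_fitness X x u)
       * (Y == pv_step X u v)%:R.

(* pv_hit T X = P[exists t <= T, X_t = V | X_0 = X] *)
Fixpoint pv_hit (T : nat) (X : {set V}) : R :=
  match T with
  | 0 => (X == [set: V])%:R
  | T'.+1 => if X == [set: V] then 1
             else \sum_(Y : {set V}) pv_trans X Y * pv_hit T' Y
  end.

Definition fp_conf (X : {set V}) : R := limn (fun T => pv_hit T X).

Definition fp : R := (#|V|%:R)^-1 * \sum_(u : V) fp_conf [set u].
End PositionalVoter.

Definition fp_inf (R : realType) (V : finType) (E : rel V) (S : {set V}) : R :=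
  lim ((fun d : R => fp E S d) @ +oo%R)%classic.

Definition submodular (R : realType) (V : finType) (f : {set V} -> R) : Prop :=
  forall S1 S2 : {set V}, f (S1 :|: S2) + f (S1 :&: S2) <= f S1 + f S2.

From HB Require Import structures.
From mathcomp Require Import all_boot all_order all_algebra.
From mathcomp Require Import all_classical all_reals all_analysis.
From mathcomp Require Import ring lra.
Set Implicit Arguments. Unset Strict Implicit. Unset Printing Implicit Defensive.
Import Order.TTheory GRing.Theory Num.Theory.
Import numFieldTopology.Exports numFieldNormedType.Exports.
Local Open Scope ring_scope.

(* As delta -> +oo the transition matrix of the voter chain converges entrywise
   to that of a limit chain L_S: an updated node of S having a mutant
   in-neighbour copies a uniformly random mutant in-neighbour, every other
   node copies a uniformly random in-neighbour.

   Since
      L_S is absorbed in {empty, V} within |V| steps with probability at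
      least |V|^(-2|V|) from every configuration, a squeeze argument gives
      fp(G^S, delta, X) -> 1 - ext_S(X), where ext_S(X) is the probability
      that L_S started at X dies out.
   3. Coupling with the neutral chain: ext_S(X) is the neutral probability
      that the mutant dies out and no node of S is ever updated while having
      a mutant in-neighbour.  This event is supermodular in S, hence so is
      ext_S(X), and fp^oo(G^S) = 1/|V| sum_u (1 - ext_S({u})) is submodular. *)

Section Hitting.
Variables (R : realType) (T : finType) (P : T -> T -> R).
Implicit Types (a b : pred T) (x y : T).

Fixpoint hit a n x : R :=
  match n with
  | 0 => (a x)%:R
  | n'.+1 => if a x then 1 else \sum_y P x y * hit a n' y
  end.

Definition closed_set a := forall x y, a x -> P x y != 0 -> a y.

Lemma hit_in a n x : a x -> hit a n x = 1.
Proof. by case: n => [|n] /= ->. Qed.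

Lemma hit_closed_out a b n x :
  closed_set b -> (forall y, b y -> ~~ a y) -> b x -> hit a n x = 0.
Proof.
move=> b_cl ab; elim: n x => [|n IH] x bx /=; first by rewrite (negbTE (ab x bx)).
rewrite (negbTE (ab x bx)); apply: big1 => y _.
have [->|/(b_cl _ _ bx)/IH ->] := eqVneq (P x y) 0; by rewrite ?mul0r ?mulr0.
Qed.

Lemma hit_predU a b n x : closed_set a -> closed_set b ->
  (forall y, a y -> ~~ b y) -> hit (predU a b) n x = hit a n x + hit b n x.
Proof.
move=> a_cl b_cl ab.
have ba y : b y -> ~~ a y by move=> ay; apply/negP => /ab; rewrite ay.
elim: n x => [|n IH] x.
  by rewrite /=; case ax: (a x); [rewrite (negbTE (ab x ax)) addr0 | rewrite add0r].
case ax: (a x); first by rewrite (hit_closed_out n.+1 a_cl ab ax) addr0 /= ax.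
case bx: (b x); first by rewrite (hit_closed_out n.+1 b_cl ba bx) add0r /= ax bx.
by rewrite /= ax bx -big_split /=; apply: eq_bigr => y _; rewrite IH mulrDr.
Qed.

Section Stochastic.
Hypothesis P_ge0 : forall x y, 0 <= P x y.
Hypothesis P_sum1 : forall x, \sum_y P x y = 1.

Lemma hit_ge0 a n x : 0 <= hit a n x.
Proof.
elim: n x => [|n IH] x /=; first by rewrite ler0n.
by case: (a x) => //; apply: sumr_ge0 => y _; exact: mulr_ge0.
Qed.

Lemma hit_le1 a n x : hit a n x <= 1.
Proof.
elim: n x => [|n IH] x /=; first by case: (a x); rewrite ?ler01.
case: (a x) => //; rewrite -(P_sum1 x); apply: ler_sum => y _.
by rewrite -{2}(mulr1 (P x y)); apply: ler_wpM2l.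
Qed.

Lemma hit_mono a m n x : (m <= n)%N -> hit a m x <= hit a n x.
Proof.
have hitS k y : hit a k y <= hit a k.+1 y.
  elim: k y => [|k IH] y /=.
    by case: (a y) => //=; apply: sumr_ge0 => z _; rewrite mulr_ge0 ?ler0n.
  by case: (a y) => //; apply: ler_sum => z _; exact: ler_wpM2l.
move=> /subnK <-; elim: (n - m)%N => [|k IH] //=.
exact: le_trans IH (hitS _ _).
Qed.

Lemma hit_step a n x y : ~~ a x -> P x y * hit a n y <= hit a n.+1 x.
Proof.
move=> /negbTE /= ->; rewrite (bigD1 y) //= lerDl.
by apply: sumr_ge0 => z _; rewrite mulr_ge0 ?hit_ge0.
Qed.

Lemma hit_disjoint_le1 a b m n x : closed_set a -> closed_set b ->
  (forall y, a y -> ~~ b y) -> hit a m x + hit b n x <= 1.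
Proof.
move=> a_cl b_cl ab; apply: le_trans (hit_le1 (predU a b) (maxn m n) x).
rewrite hit_predU //; apply: lerD; apply: hit_mono; [exact: leq_maxl | exact: leq_maxr].
Qed.

Lemma hit_descent a (phi : T -> nat) (eta : R) : 0 <= eta <= 1 ->
  (forall x, ~~ a x -> exists y, (phi y < phi x)%N /\ eta <= P x y) ->
  forall k x, (phi x <= k)%N -> eta ^+ k <= hit a k x.
Proof.
move=> /andP[eta_ge0 eta_le1] descent; elim=> [|k IH] x phi_x.
  case ax: (a x); first by rewrite hit_in // expr0.
  have [y [lt_phi _]] := descent x (negbT ax).
  by have := leq_trans lt_phi phi_x; rewrite ltn0.
case ax: (a x); first by rewrite hit_in // exprn_ile1.
have [y [lt_phi le_eta]] := descent x (negbT ax).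
apply: le_trans (hit_step k y (negbT ax)).
rewrite exprS; apply: ler_pM; rewrite ?exprn_ge0 //.
by apply: IH; rewrite -ltnS (leq_trans lt_phi).
Qed.

Definition miss a n x := 1 - hit a n x.

Lemma miss_S a n x :
  miss a n.+1 x = if a x then 0 else \sum_y P x y * miss a n y.
Proof.
rewrite /miss /=; case: (a x); first by rewrite subrr.
by rewrite -{1}(P_sum1 x) -sumrB; apply: eq_bigr => y _; rewrite mulrBr mulr1.
Qed.

Lemma miss_decay a m n M : (forall y, miss a n y <= M) ->
  forall x, miss a (m + n) x <= miss a m x * M.
Proof.
move=> missM; elim: m => [|m IH] x.
  rewrite add0n; case ax: (a x); first by rewrite /miss !hit_in // subrr mul0r.
  by rewrite {2}/miss /= ax subr0 mul1r; exact: missM.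
rewrite addSn !miss_S; case: (a x); first by rewrite mul0r.
rewrite mulr_suml; apply: ler_sum => y _; rewrite -mulrA; exact: ler_wpM2l.
Qed.

Lemma hit_cvg1 a n (eps : R) : 0 < eps -> (forall y, eps <= hit a n y) ->
  forall x, (hit a k x @[k --> \oo] --> (1 : R))%classic.
Proof.
move=> eps_gt0 eps_le x.
have q_ge0 : 0 <= 1 - eps by rewrite subr_ge0 (le_trans (eps_le x)) ?hit_le1.
have missK K y : miss a (K * n) y <= (1 - eps) ^+ K.
  elim: K y => [|K IH] y; first by rewrite /miss expr0 lerBlDr lerDl hit_ge0.
  rewrite mulSnr exprSr; apply: le_trans (@miss_decay a (K * n) n (1 - eps) _ y) _.
    by move=> z; rewrite /miss lerD2l lerN2.
  exact: ler_wpM2r.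
have q_lt1 : `|1 - eps| < 1.
  by rewrite ger0_norm // ltrBlDr ltrDl.
apply/cvgrPdist_le => e e_gt0.
have [K _ smallK] := cvgr_dist_le _ _ (cvg_expr q_lt1) _ e_gt0.
exists (K * n)%N => // k /= Kk; rewrite ger0_norm ?subr_ge0 ?hit_le1 //.
apply: le_trans (_ : miss a (K * n) x <= _); first by rewrite /miss lerD2l lerN2 hit_mono.
apply: le_trans (missK K x) _.
by have := smallK K (leqnn K); rewrite sub0r normrN ger0_norm // exprn_ge0.
Qed.

Definition hit_lim a x := limn (fun n => hit a n x).

Lemma hit_lim_cvg a x : (hit a n x @[n --> \oo] --> hit_lim a x)%classic.
Proof.
apply: nondecreasing_is_cvgn; first by move=> i j ij; exact: hit_mono.
by exists 1 => _ [k _ <-]; exact: hit_le1.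
Qed.

Lemma hit_le_lim a n x : hit a n x <= hit_lim a x.
Proof.
apply: nondecreasing_cvgn_le; last exact: hit_lim_cvg.
by move=> i j; exact: hit_mono.
Qed.

Lemma hit_lim_le a x (c : R) : (forall n, hit a n x <= c) -> hit_lim a x <= c.
Proof.
by move=> le_c; apply: limr_le; [exact: hit_lim_cvg | near=> k].
Unshelve. all: by end_near.
Qed.

End Stochastic.
End Hitting.

Lemma cvg_sum (R : realType) (U : Type) (F : set_system U) (FF : Filter F)
    (I : finType) (Q : pred I) (f : I -> U -> R) (l : I -> R) :
  (forall i, Q i -> f i u @[u --> F] --> l i)%classic ->
  (\sum_(i | Q i) f i u @[u --> F] --> \sum_(i | Q i) l i)%classic.
Proof. by move=> f_cvg; apply: cvg_big => //; exact: add_continuous. Qed.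

Lemma hit_cvg (R : realType) (U : Type) (F : set_system U) (FF : Filter F)
    (T : finType) (P : U -> T -> T -> R) (L : T -> T -> R) (a : pred T) n x :
  (forall x y, P d x y @[d --> F] --> L x y)%classic ->
  (hit (P d) a n x @[d --> F] --> hit L a n x)%classic.
Proof.
move=> P_cvg; elim: n x => [|n IH] x /=; first exact: cvg_cst.
by case: (a x); [exact: cvg_cst | apply: cvg_sum => y _; exact: cvgM].
Qed.

Lemma cvg_ratio (R : realType) (b c k D : R) : 0 < k ->
  ((b * d + c) / (k * d + D) @[d --> +oo] --> b / k)%classic.
Proof.
move=> k_gt0.
have inv_cvg0 : (d^-1 @[d --> +oo] --> (0 : R))%classic.
  by apply/gtr0_cvgV0; [near=> d | exact: cvg_id].
have affine_cvg (x y : R) : (x + y * d^-1 @[d --> +oo] --> x)%classic.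
  rewrite -[X in (_ --> X)%classic]addr0 -(mulr0 y).
  by apply: cvgD; [exact: cvg_cst | exact: cvgMl_tmp].
apply: cvg_trans (_ : ((b + c * d^-1) / (k + D * d^-1) @[d --> +oo] --> _)%classic).
  apply: near_eq_cvg; near=> d.
  have d_gt0 : 0 < d by near: d; exact: nbhs_pinfty_gt.
  have kdD_gt0 : 0 < k * d + D.
    have : - D / k < d by near: d; apply: nbhs_pinfty_gt; exact: num_real.
    by rewrite ltr_pdivrMr // => ?; lra.
  by field; rewrite !gt_eqF.
by apply: cvgM; [exact: affine_cvg | apply: cvgV; [rewrite gt_eqF | exact: affine_cvg]].
Unshelve. all: by end_near.
Qed.

Lemma cvg_squeeze_limits (R : realType) (U : Type) (F : set_system U)
    (FF : Filter F) (f : U -> R) (lo hi : nat -> U -> R) (lo' hi' : nat -> R)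
    (l : R) :
  (forall k, \forall u \near F, lo k u <= f u <= hi k u) ->
  (forall k, lo k u @[u --> F] --> lo' k)%classic ->
  (forall k, hi k u @[u --> F] --> hi' k)%classic ->
  (lo' @ \oo --> l)%classic -> (hi' @ \oo --> l)%classic ->
  (f @ F --> l)%classic.
Proof.
move=> bounds lo_cvg hi_cvg lo'_cvg hi'_cvg; apply/cvgrPdist_le => e e0.
have e2 : 0 < e / 2 by rewrite divr_gt0.
have [k1 _ lo'_near] := cvgr_dist_le _ _ lo'_cvg _ e2.
have [k2 _ hi'_near] := cvgr_dist_le _ _ hi'_cvg _ e2.
pose k := maxn k1 k2.
have := lo'_near k (leq_maxl k1 k2); have := hi'_near k (leq_maxr k1 k2).
rewrite /= !ler_norml => /andP[h1 h2] /andP[h3 h4].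
near=> u.
have /andP[lb ub] : lo k u <= f u <= hi k u by near: u; exact: bounds.
have : `|lo' k - lo k u| <= e / 2 by near: u; exact: cvgr_dist_le.
have : `|hi' k - hi k u| <= e / 2 by near: u; exact: cvgr_dist_le.
rewrite !ler_norml => /andP[h5 h6] /andP[h7 h8].
by apply/andP; split; lra.
Unshelve. all: by end_near.
Qed.

Section VoterChain.
Variables (R : realType) (V : finType) (E : rel V).
Hypothesis E_sym : symmetric E.
Hypothesis E_refl : forall u, E u u.
Hypothesis E_conn : forall u v, connect E u v.
Hypothesis V_gt0 : (0 < #|V|)%N.

Local Notation n := #|V|.
Local Notation set0 := (@finset.set0 V).
Implicit Types (S X Y B : {set V}) (u v : V).

Definition is_full : pred {set V} := fun X => X == [set: V].
Definition is_empty : pred {set V} := fun X => X == set0.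
Definition absorbed : pred {set V} := predU is_full is_empty.

Lemma full_not_empty X : is_full X -> ~~ is_empty X.
Proof.
move=> /eqP ->; apply/set0Pn; have /card_gt0P [x _] := V_gt0.
by exists x; rewrite inE.
Qed.

Lemma pv_hitE S (d : R) k X :
  pv_hit E S d k X = hit (pv_trans E S d) is_full k X.
Proof. by elim: k X => //= k IH X; under eq_bigr do rewrite IH. Qed.

Lemma fp_confE S (d : R) X :
  fp_conf E S d X = hit_lim (pv_trans E S d) is_full X.
Proof.
by rewrite /fp_conf /hit_lim; congr (limn _); apply: funext => k; rewrite pv_hitE.
Qed.

Definition deg u : nat := #|[pred x | E x u]|.
Definition degX X u : nat := #|[pred x | E x u && (x \in X)]|.

Lemma deg_gt0 u : (0 < deg u)%N.
Proof. by apply/card_gt0P; exists u; rewrite inE /= E_refl. Qed.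

Lemma sum_in_nbrs_cst u (c : R) : \sum_(x | E x u) c = c *+ deg u.
Proof. exact: (sumr_const [pred y | E y u] c). Qed.

Lemma sum_in_nbrs_mem u X : \sum_(x | E x u) (x \in X)%:R = (degX X u)%:R :> R.
Proof.
rewrite -(sumr_const [pred x | E x u && (x \in X)] (1 : R)).
by rewrite big_mkcondr; apply: eq_bigr => x _; case: (x \in X).
Qed.

Lemma sum_in_nbrs_uniform u : \sum_(v | E v u) (deg u)%:R^-1 = 1 :> R.
Proof.
by rewrite sum_in_nbrs_cst -[_ *+ _]mulr_natr mulVf // pnatr_eq0 -lt0n deg_gt0.
Qed.

Lemma sum_uniform : \sum_(u : V) n%:R^-1 = 1 :> R.
Proof. by rewrite sumr_const -[_ *+ _]mulr_natr mulVf // pnatr_eq0 -lt0n. Qed.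

Definition update_kernel (W : {set V} -> V -> V -> R) X Y : R :=
  \sum_u n%:R^-1 * \sum_(v | E v u) W X u v * (Y == pv_step X u v)%:R.

Section UpdateKernel.
Variable W : {set V} -> V -> V -> R.
Hypothesis W_ge0 : forall X u v, 0 <= W X u v.

Lemma kernel_ge0 X Y : 0 <= update_kernel W X Y.
Proof.
apply: sumr_ge0 => u _; rewrite mulr_ge0 ?invr_ge0 //.
by apply: sumr_ge0 => v _; rewrite mulr_ge0 ?ler0n.
Qed.

Lemma kernel_expect X (g : {set V} -> R) :
  \sum_Y update_kernel W X Y * g Y =
  \sum_u n%:R^-1 * \sum_(v | E v u) W X u v * g (pv_step X u v).
Proof.
under eq_bigr do rewrite mulr_suml; rewrite exchange_big; apply: eq_bigr => u _.
under eq_bigr do rewrite -mulrA; rewrite -mulr_sumr; congr (_ * _).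
under eq_bigr do rewrite mulr_suml; rewrite exchange_big; apply: eq_bigr => v _.
rewrite (bigD1 (pv_step X u v)) //= eqxx mulr1 big1 ?addr0 // => Y /negbTE ->.
by rewrite mulr0 mul0r.
Qed.

Lemma kernel_sum1 X : (forall u, \sum_(v | E v u) W X u v = 1) ->
  \sum_Y update_kernel W X Y = 1.
Proof.
move=> W_sum1; under eq_bigr do rewrite -[update_kernel _ _ _]mulr1.
rewrite (kernel_expect X (fun=> 1)) -[RHS]sum_uniform; apply: eq_bigr => u _.
by under eq_bigr do rewrite mulr1; rewrite W_sum1 mulr1.
Qed.

Lemma kernel_support X Y : update_kernel W X Y != 0 ->
  exists u v, [/\ E v u, W X u v != 0 & Y = pv_step X u v].
Proof.
apply: contraNP => none; apply/eqP/big1 => u _; rewrite big1 ?mulr0 // => v Evu.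
have [Y_step|] := eqVneq Y (pv_step X u v); last by rewrite mulr0.
have [->|W_neq0] := eqVneq (W X u v) 0; first by rewrite mul0r.
by case: none; exists u, v.
Qed.

Lemma kernel_step_lb X u v : E v u ->
  n%:R^-1 * W X u v <= update_kernel W X (pv_step X u v).
Proof.
move=> Evu; rewrite /update_kernel (bigD1 u) //= -[X in X <= _]addr0.
apply: lerD; last by apply: sumr_ge0 => w _; rewrite mulr_ge0 ?invr_ge0 //;
  apply: sumr_ge0 => z _; rewrite mulr_ge0 ?ler0n.
rewrite ler_wpM2l ?invr_ge0 // (bigD1 v) //= eqxx mulr1 lerDl.
by apply: sumr_ge0 => z _; rewrite mulr_ge0 ?ler0n.
Qed.

End UpdateKernel.

Lemma kernel_closed_full W : closed_set (update_kernel W) is_full.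
Proof.
move=> X Y /eqP -> /kernel_support [u [v [_ _ ->]]].
by rewrite /is_full /pv_step inE; apply/eqP/setP => w; rewrite !inE orbT.
Qed.

Lemma kernel_closed_empty W : closed_set (update_kernel W) is_empty.
Proof.
move=> X Y /eqP -> /kernel_support [u [v [_ _ ->]]].
by rewrite /is_empty /pv_step inE; apply/eqP/setP => w; rewrite !inE andbF.
Qed.

Lemma kernel_cvg (U : Type) (F : set_system U) (FF : Filter F)
    (Wd : U -> {set V} -> V -> V -> R) (W : {set V} -> V -> V -> R) X Y :
  (forall u v, E v u -> Wd d X u v @[d --> F] --> W X u v)%classic ->
  (update_kernel (Wd d) X Y @[d --> F] --> update_kernel W X Y)%classic.
Proof.
move=> W_cvg; apply: cvg_sum => u _; apply: cvgMl_tmp; apply: cvg_sum => v Evu.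
by apply: cvgMr_tmp; exact: W_cvg.
Qed.

Definition fit_weight S (d : R) X u v : R :=
  pv_fitness S d X v u / \sum_(x | E x u) pv_fitness S d X x u.

Lemma pv_transE S (d : R) : pv_trans E S d = update_kernel (fit_weight S d).
Proof. by []. Qed.

Lemma fitness_sum S (d : R) X u :
  \sum_(x | E x u) pv_fitness S d X x u =
  (if u \in S then (degX X u)%:R * d else 0) + (deg u)%:R.
Proof.
rewrite /pv_fitness; case uS: (u \in S); last first.
  by under eq_bigr do rewrite andbF; rewrite sum_in_nbrs_cst add0r.
transitivity (\sum_(x | E x u) (d * (x \in X)%:R + 1)).
  apply: eq_bigr => x _; rewrite andbT.
  by case: (x \in X); rewrite ?mulr1 ?mulr0 ?add0r // addrC.
by rewrite big_split /= -mulr_sumr sum_in_nbrs_mem sum_in_nbrs_cst mulrC.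
Qed.

Lemma fit_weight_ge0 S (d : R) X u v : 0 <= d -> 0 <= fit_weight S d X u v.
Proof.
move=> d_ge0; rewrite /fit_weight fitness_sum divr_ge0 //.
  by rewrite /pv_fitness; case: ifP => _; rewrite ?addr_ge0.
by rewrite addr_ge0 //; case: ifP => _; rewrite ?mulr_ge0.
Qed.

Lemma fit_weight_sum1 S (d : R) X u : 0 <= d ->
  \sum_(v | E v u) fit_weight S d X u v = 1.
Proof.
move=> d_ge0; rewrite -mulr_suml divff // fitness_sum lt0r_neq0 //.
rewrite ltr_wpDl ?ltr0n ?deg_gt0 //.
by case: ifP => _; rewrite ?mulr_ge0.
Qed.

Definition lim_weight S X u v : R :=
  if (u \in S) && (0 < degX X u)%N then (v \in X)%:R / (degX X u)%:R
  else (deg u)%:R^-1.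

Lemma lim_weight_ge0 S X u v : 0 <= lim_weight S X u v.
Proof. by rewrite /lim_weight; case: ifP => _; rewrite ?divr_ge0 ?invr_ge0. Qed.

Lemma lim_weight_sum1 S X u : \sum_(v | E v u) lim_weight S X u v = 1.
Proof.
rewrite /lim_weight; case: andP => [[_ degX_gt0]|_]; last exact: sum_in_nbrs_uniform.
by rewrite -mulr_suml sum_in_nbrs_mem divff // pnatr_eq0 -lt0n.
Qed.

Lemma lim_weight_lb S X u v : E v u -> (u \in S -> v \in X) ->
  n%:R^-1 <= lim_weight S X u v.
Proof.
have inv_le k : (0 < k <= n)%N -> n%:R^-1 <= k%:R^-1 :> R.
  by case/andP=> k_gt0 k_le; rewrite lef_pV2 ?posrE ?ltr0n ?ler_nat.
move=> Evu S_X; rewrite /lim_weight; case: ifP => [/andP [uS k_gt0]|_].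
  by rewrite S_X // mul1r inv_le ?k_gt0 ?max_card.
by rewrite inv_le ?deg_gt0 ?max_card.
Qed.

Lemma fit_weight_cvg S X u v : E v u ->
  (fit_weight S d X u v @[d --> +oo] --> lim_weight S X u v)%classic.
Proof.
move=> Evu; rewrite /fit_weight; under eq_fun do rewrite fitness_sum.
rewrite /lim_weight /pv_fitness; case uS: (u \in S) => /=; last first.
  by under eq_fun do rewrite andbF add0r; rewrite div1r; exact: cvg_cst.
have [k_gt0|] := ltnP 0 (degX X u); last first.
  rewrite leqn0 => /eqP k0; rewrite k0.
  have vX : (v \in X) = false.
    apply: contra_eqF k0 => vX; rewrite -lt0n.
    by apply/card_gt0P; exists v; rewrite inE /= Evu vX.
  by under eq_fun do rewrite vX /= mul0r add0r; rewrite div1r; exact: cvg_cst.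
rewrite andbT; have := @cvg_ratio R (v \in X)%:R 1 (degX X u)%:R (deg u)%:R.
rewrite ltr0n => /(_ k_gt0); apply: cvg_trans; apply: near_eq_cvg; near=> d.
by case: (v \in X); [rewrite mul1r (addrC d) | rewrite mul0r add0r].
Unshelve. all: by end_near.
Qed.

Lemma pv_trans_ge0 S (d : R) X Y : 0 <= d -> 0 <= pv_trans E S d X Y.
Proof.
by move=> d_ge0; rewrite pv_transE; apply: kernel_ge0 => ? ? ?; exact: fit_weight_ge0.
Qed.

Lemma pv_trans_sum1 S (d : R) X : 0 <= d -> \sum_Y pv_trans E S d X Y = 1.
Proof.
by move=> d_ge0; rewrite pv_transE; apply: kernel_sum1 => u; exact: fit_weight_sum1.
Qed.

Definition limit_kernel S := update_kernel (lim_weight S).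

Lemma limit_kernel_ge0 S X Y : 0 <= limit_kernel S X Y.
Proof. exact/kernel_ge0/lim_weight_ge0. Qed.

Lemma limit_kernel_sum1 S X : \sum_Y limit_kernel S X Y = 1.
Proof. exact/kernel_sum1/lim_weight_sum1. Qed.

Lemma pv_trans_cvg S X Y :
  (pv_trans E S d X Y @[d --> +oo] --> limit_kernel S X Y)%classic.
Proof. exact: (@kernel_cvg _ _ _ (fit_weight S) _ X Y (@fit_weight_cvg S X)). Qed.

Lemma crossing_edge X x y : x \in X -> y \notin X ->
  exists u v, [/\ u \in X, v \notin X & E v u].
Proof.
move=> xX yX; apply: contrapT => none.
have X_closed : closed_mem E (mem X).
  move=> a b Eab; apply/idP/idP => [aX|bX]; apply/negPn/negP => notX; apply: none.
    by exists a, b; rewrite E_sym.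
  by exists b, a.
by have := closed_connect X_closed (E_conn x y); rewrite xX (negbTE yX).
Qed.

(* Lower bound on the probability of any update that copies a mutant or
   changes a node outside S, in the limit chain. *)
Definition eta : R := n%:R^-1 * n%:R^-1.

Lemma eta_gt0 : 0 < eta.
Proof. by rewrite mulr_gt0 // invr_gt0 ltr0n. Qed.

Lemma eta_le1 : eta <= 1.
Proof.
have inv_le1 : n%:R^-1 <= 1 :> R by rewrite invf_le1 ?ltr0n ?ler1n.
by rewrite /eta mulr_ile1 // invr_ge0.
Qed.

Lemma limit_kernel_step_lb S X u v : E v u -> (u \in S -> v \in X) ->
  eta <= limit_kernel S X (pv_step X u v).
Proof.
move=> Evu S_X; apply: le_trans _ (kernel_step_lb (lim_weight_ge0 S) X Evu).
by rewrite ler_wpM2l ?invr_ge0 ?lim_weight_lb.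
Qed.

(* The limit chain drifts towards extinction when no mutant lies in S, and
   towards fixation otherwise; this is the distance it has to travel. *)
Definition potential S X : nat := if X :&: S == set0 then #|X| else #|~: X|.

Lemma limit_descent S X : ~~ absorbed X ->
  exists Y, (potential S Y < potential S X)%N /\ eta <= limit_kernel S X Y.
Proof.
rewrite negb_or => /andP[not_full /set0Pn [x xX]].
have /fintype.subsetPn [y _ yX] : ~~ ([set: V] \subset X) by rewrite finset.subTset.
rewrite /potential; have [XS|XS] := eqVneq (X :&: S) set0.
  have [u [v [uX vX Evu]]] := crossing_edge xX yX.
  have uS : u \notin S by apply/negP => uS; move/setP: XS => /(_ u); rewrite !inE uX uS.
  exists (X :\ u); split.
    rewrite (_ : _ :&: S = set0); first by rewrite eqxx (cardsD1 u X) uX.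
    by apply/eqP; rewrite -finset.subset0 -XS finset.setSI // finset.subD1set.
  have S_X : u \in S -> v \in X by rewrite (negbTE uS).
  have := limit_kernel_step_lb Evu S_X.
  by rewrite /pv_step (negbTE vX).
have [u [v [uX vX Evu]]] : exists u v, [/\ u \in ~: X, v \notin ~: X & E v u].
  by apply: (crossing_edge (x := y) (y := x)); rewrite !inE ?yX ?xX.
rewrite inE negbK in vX; rewrite inE in uX.
exists (u |: X); split.
  rewrite (_ : (_ :&: S == set0) = false); last first.
    apply: contraNF XS; rewrite -!finset.subset0; apply: fintype.subset_trans.
    by rewrite finset.setSI // finset.subsetUr.
  by rewrite finset.setCU (cardsD1 u (~: X)) inE uX add1n ltnS finset.setIC -finset.setDE.
have := limit_kernel_step_lb Evu (fun=> vX).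
by rewrite /pv_step vX.
Qed.

(* From any configuration the limit chain is absorbed within n steps with
   probability at least eta^n, hence it is absorbed almost surely. *)
Lemma limit_absorbed_cvg S X :
  (hit (limit_kernel S) absorbed k X @[k --> \oo] --> (1 : R))%classic.
Proof.
apply: (hit_cvg1 (limit_kernel_ge0 S) (limit_kernel_sum1 S) (n := n)
  (exprn_gt0 n eta_gt0)).
move=> Y; apply: (hit_descent (limit_kernel_ge0 S) (phi := potential S)).
- by rewrite ltW ?eta_gt0 ?eta_le1.
- exact: limit_descent.
- by rewrite /potential; case: ifP => _; exact: max_card.
Qed.

Definition ext S X : R := hit_lim (limit_kernel S) is_empty X.

Lemma ext_cvg S X :
  (hit (limit_kernel S) is_empty k X @[k --> \oo] --> ext S X)%classic.
Proof.
exact: (hit_lim_cvg (limit_kernel_ge0 S) (limit_kernel_sum1 S) (a := is_empty)).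
Qed.

Lemma limit_fix_cvg S X :
  (hit (limit_kernel S) is_full k X @[k --> \oo] --> 1 - ext S X)%classic.
Proof.
have split_abs k : hit (limit_kernel S) is_full k X =
    hit (limit_kernel S) absorbed k X - hit (limit_kernel S) is_empty k X.
  rewrite hit_predU ?addrK //.
  - exact: kernel_closed_full.
  - exact: kernel_closed_empty.
  - exact: full_not_empty.
under eq_fun do rewrite split_abs.
by apply: cvgB; [exact: limit_absorbed_cvg | exact: ext_cvg].
Qed.

Lemma fp_conf_bounds S (d : R) k X : 0 <= d ->
  hit (pv_trans E S d) is_full k X <= fp_conf E S d X <=
  1 - hit (pv_trans E S d) is_empty k X.
Proof.
move=> d_ge0; have P_ge0 X' Y := pv_trans_ge0 S X' Y d_ge0.
have P_sum1 X' := pv_trans_sum1 S X' d_ge0.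
rewrite fp_confE hit_le_lim //=; apply: hit_lim_le => // j.
rewrite lerBrDr hit_disjoint_le1 //.
- exact: kernel_closed_full.
- exact: kernel_closed_empty.
- exact: full_not_empty.
Qed.

Lemma fp_conf_cvg S X :
  (fp_conf E S d X @[d --> +oo] --> 1 - ext S X)%classic.
Proof.
apply: (@cvg_squeeze_limits _ _ _ _ _
  (fun k d => hit (pv_trans E S d) is_full k X)
  (fun k d => 1 - hit (pv_trans E S d) is_empty k X)
  (fun k => hit (limit_kernel S) is_full k X)
  (fun k => 1 - hit (limit_kernel S) is_empty k X)).
- move=> k; near=> d; apply: fp_conf_bounds.
  by apply: ltW; near: d; apply: nbhs_pinfty_gt; exact: num_real.
- by move=> k; apply: hit_cvg => Y Z; exact: pv_trans_cvg.
- by move=> k; apply: cvgB; [exact: cvg_cst | apply: hit_cvg => Y Z; exact: pv_trans_cvg].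
- exact: limit_fix_cvg.
- by apply: cvgB; [exact: cvg_cst | exact: ext_cvg].
Unshelve. all: by end_near.
Qed.

Lemma fp_inf_value S : fp_inf R E S = n%:R^-1 * \sum_u (1 - ext S [set u]).
Proof.
apply: cvg_lim; first exact: Rhausdorff.
by apply: cvgMl_tmp; apply: cvg_sum => u _; exact: fp_conf_cvg.
Qed.

(* Coupling with the neutral chain.  The record B collects the nodes that
   were updated while having a mutant in-neighbour. *)
Definition record X B u : {set V} := if (0 < degX X u)%N then u |: B else B.

(* neutral_exp phi k X B is the expectation of phi (X_k, B_k), where X_t is
   the neutral voter chain (delta = 0) started at X and B_t the record
   started at B. *)
Fixpoint neutral_exp (phi : {set V} -> {set V} -> R) k X B : R :=
  match k with
  | 0 => phi X B
  | k'.+1 => \sum_u n%:R^-1 * \sum_(v | E v u) (deg u)%:R^-1 *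
               neutral_exp phi k' (pv_step X u v) (record X B u)
  end.

Lemma neutral_average (c : R) :
  \sum_u n%:R^-1 * \sum_(v | E v u) (deg u)%:R^-1 * c = c.
Proof.
under eq_bigr do rewrite -mulr_suml sum_in_nbrs_uniform mul1r.
by rewrite -mulr_suml sum_uniform mul1r.
Qed.

Lemma neutral_exp_add phi1 phi2 k X B :
  neutral_exp (fun X B => phi1 X B + phi2 X B) k X B =
  neutral_exp phi1 k X B + neutral_exp phi2 k X B.
Proof.
elim: k X B => [|k IH] X B //=; rewrite -big_split /=; apply: eq_bigr => u _.
by rewrite -mulrDr -big_split /=; congr (_ * _); apply: eq_bigr => v _; rewrite IH mulrDr.
Qed.

Lemma neutral_exp_le phi1 phi2 k X B : (forall X B, phi1 X B <= phi2 X B) ->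
  neutral_exp phi1 k X B <= neutral_exp phi2 k X B.
Proof.
move=> le_phi; elim: k X B => [|k IH] X B //=.
apply: ler_sum => u _; rewrite ler_wpM2l ?invr_ge0 //.
by apply: ler_sum => v _; rewrite ler_wpM2l ?invr_ge0.
Qed.

Definition ext_event S X B : R := ((X == set0) && (B :&: S == set0))%:R.

(* The record only grows, so once it meets S the event is excluded. *)
Lemma neutral_exp_record_hits S k X B :
  B :&: S != set0 -> neutral_exp (ext_event S) k X B = 0.
Proof.
elim: k X B => [|k IH] X B BS /=; first by rewrite /ext_event (negbTE BS) andbF.
apply: big1 => u _; rewrite big1 ?mulr0 // => v _; rewrite IH ?mulr0 //.
apply: contraNN BS; rewrite -!finset.subset0; apply: fintype.subset_trans.
by rewrite finset.setSI // /record; case: ifP => _; rewrite ?finset.subsetUr.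
Qed.

(* A mutant on a node of S is never lost in the limit chain: such a node
   updated with a mutant in-neighbour copies a mutant. *)
Lemma limit_kernel_closed_biased S :
  closed_set (limit_kernel S) (fun X => X :&: S != set0).
Proof.
move=> X Y /set0Pn [s]; rewrite inE => /andP [sX sS].
case/kernel_support => u [v [Evu weight_neq0 ->]]; apply/set0Pn.
have [us|us] := eqVneq u s; last first.
  exists s; rewrite /pv_step.
  by case: (v \in X); rewrite !inE ?sX ?sS ?andbT ?orbT 1?eq_sym ?us.
subst u; move: weight_neq0; rewrite /lim_weight sS.
have -> : (0 < degX X s)%N by apply/card_gt0P; exists s; rewrite inE /= E_refl sX.
have [vX|vX] := boolP (v \in X); last by rewrite mul0r eqxx.
by exists s; rewrite /pv_step vX !inE eqxx sS.
Qed.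

Lemma limit_ext_biased S k X : X :&: S != set0 ->
  hit (limit_kernel S) is_empty k X = 0.
Proof.
move=> XS; apply: (hit_closed_out (b := fun Y => Y :&: S != set0)) => //.
  exact: limit_kernel_closed_biased.
move=> Y.
by apply: contraNN => /eqP ->; rewrite finset.set0I.
Qed.

Lemma setIS_empty_add X S u : X :&: S = set0 -> u \notin S -> (u |: X) :&: S = set0.
Proof.
move=> /setP XS uS; apply/setP => z; move: (XS z); rewrite !inE.
by case: eqP => [->|_] //=; rewrite (negbTE uS) andbF.
Qed.

Lemma setIS_empty_del X S u : X :&: S = set0 -> (X :\ u) :&: S = set0.
Proof.
move=> /setP XS; apply/setP => z; move: (XS z); rewrite !inE.
by case: (z \in X); case: (z \in S); rewrite ?andbF ?andbT.
Qed.

Lemma coupling_update S k X B u :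
  X :&: S = set0 -> B :&: S = set0 ->
  (forall Y B', Y :&: S = set0 -> B' :&: S = set0 ->
     hit (limit_kernel S) is_empty k Y = neutral_exp (ext_event S) k Y B') ->
  \sum_(v | E v u) lim_weight S X u v * hit (limit_kernel S) is_empty k (pv_step X u v) =
  \sum_(v | E v u) (deg u)%:R^-1 *
     neutral_exp (ext_event S) k (pv_step X u v) (record X B u).
Proof.
move=> XS BS IH; case uS: (u \in S); last first.
  apply: eq_bigr => v _; rewrite /lim_weight uS; congr (_ * _); apply: IH.
    rewrite /pv_step; case: (v \in X); last exact: setIS_empty_del.
    by apply: setIS_empty_add; rewrite ?uS.
  by rewrite /record; case: ifP => _ //; apply: setIS_empty_add; rewrite ?uS.
case degX_gt0: (0 < degX X u)%N.
  have uBS : record X B u :&: S != set0.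
    by apply/set0Pn; exists u; rewrite /record degX_gt0 !inE eqxx uS.
  rewrite [RHS]big1 => [|v _]; last by rewrite neutral_exp_record_hits ?mulr0.
  apply: big1 => v _; rewrite /lim_weight uS degX_gt0 /=.
  case vX: (v \in X); last by rewrite !mul0r.
  rewrite limit_ext_biased ?mulr0 // /pv_step vX; apply/set0Pn.
  by exists u; rewrite !inE eqxx uS.
apply: eq_bigr => v Evu; rewrite /lim_weight uS degX_gt0; congr (_ * _).
have vX : v \notin X.
  apply: contraFN degX_gt0 => vX; apply/card_gt0P; exists v.
  by rewrite inE /= Evu vX.
by rewrite /pv_step (negbTE vX) /record degX_gt0; apply: IH => //; exact: setIS_empty_del.
Qed.

Lemma coupling S k X B : X :&: S = set0 -> B :&: S = set0 ->
  hit (limit_kernel S) is_empty k X = neutral_exp (ext_event S) k X B.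
Proof.
elim: k X B => [|k IH] X B XS BS; first by rewrite /= /ext_event BS eqxx andbT.
rewrite [LHS]/=; case X0: (is_empty X).
  move/eqP: X0 => ->; rewrite /= -[LHS](neutral_average 1); apply: eq_bigr => u _.
  congr (_ * _); apply: eq_bigr => v _; congr (_ * _).
  have [-> ->] : pv_step set0 u v = set0 /\ record set0 B u = B.
    split; first by rewrite /pv_step inE; apply/setP => w; rewrite !inE andbF.
    rewrite /record (_ : degX _ _ = 0%N) //.
    by apply: eq_card0 => x; rewrite in_simpl /= finset.in_set0 andbF.
  by rewrite -IH ?finset.set0I // hit_in //; exact: eqxx.
rewrite (kernel_expect (lim_weight S) X (hit (limit_kernel S) is_empty k)).
by apply: eq_bigr => u _; rewrite (coupling_update u XS BS IH).
Qed.

Lemma ext_hitE S k X :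
  hit (limit_kernel S) is_empty k X = neutral_exp (ext_event S) k X X.
Proof.
have [XS|XS] := eqVneq (X :&: S) set0; first exact: coupling.
by rewrite limit_ext_biased // neutral_exp_record_hits.
Qed.

Lemma ext_event_supermodular S1 S2 X B :
  ext_event S1 X B + ext_event S2 X B <=
  ext_event (S1 :|: S2) X B + ext_event (S1 :&: S2) X B.
Proof.
have meet_empty : (B :&: S1 == set0) || (B :&: S2 == set0) -> B :&: (S1 :&: S2) == set0.
  rewrite -!finset.subset0; case/orP; apply: fintype.subset_trans.
    by rewrite finset.setIS // finset.subsetIl.
  by rewrite finset.setIS // finset.subsetIr.
rewrite /ext_event finset.setIUr finset.setU_eq0; case: (X == set0) => //=.
move: meet_empty; case: (B :&: S1 == set0); case: (B :&: S2 == set0) => /= meet_empty;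
  last by rewrite !add0r ler0n.
all: by rewrite meet_empty //= ?addr0 ?add0r.
Qed.

Lemma ext_supermodular S1 S2 X :
  ext S1 X + ext S2 X <= ext (S1 :|: S2) X + ext (S1 :&: S2) X.
Proof.
apply: (ler_cvg_to (cvgD (@ext_cvg S1 X) (@ext_cvg S2 X))
                   (cvgD (@ext_cvg (S1 :|: S2) X) (@ext_cvg (S1 :&: S2) X))).
near=> k; rewrite !fctE !ext_hitE -!neutral_exp_add; apply: neutral_exp_le => Y B.
exact: ext_event_supermodular.
Unshelve. all: by end_near.
Qed.

Lemma fp_inf_submodular : submodular (fun S : {set V} => fp_inf R E S).
Proof.
move=> S1 S2; rewrite !fp_inf_value -!mulrDr ler_wpM2l ?invr_ge0 //.
rewrite -!big_split /=; apply: ler_sum => u _.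
by have := ext_supermodular S1 S2 [set u]; lra.
Qed.

End VoterChain.

Theorem mainTheorem8 (R : realType) (V : finType) (E : rel V) :
  symmetric E ->
  (forall u : V, E u u) ->
  (forall u v : V, connect E u v) ->
  submodular (fun S : {set V} => fp_inf R E S).
Proof.
move=> E_sym E_refl E_conn; have [V_gt0|] := ltnP 0 #|V|.
  exact: fp_inf_submodular.
rewrite leqn0 => /eqP V_empty S1 S2.
have all_eq (A B : {set V}) : A = B.
  apply/setP => x; suff: (0 < #|V|)%N by rewrite V_empty.
  by apply/card_gt0P; exists x.
by rewrite (all_eq (S1 :|: S2) S1) (all_eq (S1 :&: S2) S2).
Qed.
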